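(* Suppose Assumptions 1–4 hold and the scale function is $s(t)=t$ (on $(0,\infty)$) or $s(t)=\exp(t)$ (on $\mathbb{R}$). Let $\theta^*=(\beta^*,\gamma^* )$ be the unique minimizer of $Q$ over $\Theta$. Then $$E\Big[\frac{1}{s(X'\gamma^* )}(Y-X'\beta^* )^2\Big]\le E\big[(Y-X'\beta_{LS})^2\big]^{1/2},$$ with equality if and only if $\theta^*=\theta_{LS}$.
   Context: Let $Y$ be a scalar random variable and $X$ a random $k\times1$ vector whose first component equals $1$; let $\mathcal{X}$ denote the support of $X$. Write $\mu(X)=E[Y\mid X]$ and $\sigma(X)^2=E[(Y-\mu(X))^2\mid X]$. Let $s$ be a positive scale function, write $s_j(t)=\partial^j s(t)/\partial t^j$ for $j=1,2,3$, and set $\Theta_\gamma=\{\gamma\in\mathbb{R}^k:\Pr[s(X'\gamma)>0]=1\}$ and $\Theta=\mathbb{R}^k\times\Theta_\gamma$. For $\theta=(\beta,\gamma)\in\Theta$ put $e(Y,X,\theta)=(Y-X'\beta)/s(X'\gamma)$ and $Q(\theta)=E\big[\tfrac12\{e(Y,X,\theta)^2+1\}s(X'\gamma)\big]$. OLS solution: let $\Theta_{\gamma,LS}=\{\gamma\in\mathbb{R}:s(\gamma)>0\}$ and $(\beta_{LS},\gamma_{LS})=\arg\min_{(\beta,\gamma)\in\mathbb{R}^k\times\Theta_{\gamma,LS}}E\big[\tfrac12\{((Y-X'\beta)/s(\gamma))^2+1\}s(\gamma)\big]$; set $\theta_{LS}=(\beta_{LS},(\gamma_{LS},0_{k-1}))\in\Theta$.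 Assumption 1: for $a=0$ or $a=-\infty$, $s:(a,\infty)\to(0,\infty)$ is three times differentiable, strictly increasing and convex, with $\lim_{t\to a}s(t)=0$ and $\lim_{t\to\infty}s(t)=\infty$. Assumption 2: $x\mapsto\sigma(x)^2$ is bounded away from $0$ uniformly on $\mathcal{X}$. Assumption 3: (i) $E[Y^4]<\infty$ and $E\|X\|^4<\infty$; (ii) for all $\gamma\in\Theta_\gamma$, $E[\|X\|^4s_2(X'\gamma)^2]<\infty$, $E[\|X\|^6s_3(X'\gamma)^2]<\infty$ and $E[\|X\|^6s_1(X'\gamma)^2s_2(X'\gamma)^2]<\infty$. Assumption 4: for all $\gamma\in\Theta_\gamma$, $E[XX'/s(X'\gamma)]$ is nonsingular. *)

From HB Require Import structures.
From mathcomp Require Import all_boot all_order all_algebra.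
From mathcomp Require Import all_classical all_reals all_analysis.
Set Implicit Arguments. Unset Strict Implicit. Unset Printing Implicit Defensive.
Import Order.TTheory GRing.Theory Num.Theory.
Local Open Scope classical_set_scope.
Local Open Scope ring_scope.

(* Vectors of R^k are k-tuples (measurable with the product sigma-algebra). *)
Definition dotv {R : realType} {k : nat} (x b : k.-tuple R) : R :=
  \sum_(i < k) tnth x i * tnth b i.

Definition nrm2 {R : realType} {k : nat} (x : k.-tuple R) : R :=
  \sum_(i < k) tnth x i ^+ 2.

Inductive scale_kind := LinScale | ExpScale.

(* s and its derivatives s_1, s_2, s_3 (written out explicitly). *)
Definition sc {R : realType} (sk : scale_kind) (t : R) : R :=
  match sk with LinScale => t | ExpScale => expR t end.
Definition sc1 {R : realType} (sk : scale_kind) (t : R) : R :=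
  match sk with LinScale => 1 | ExpScale => expR t end.
Definition sc2 {R : realType} (sk : scale_kind) (t : R) : R :=
  match sk with LinScale => 0 | ExpScale => expR t end.
Definition sc3 {R : realType} (sk : scale_kind) (t : R) : R :=
  match sk with LinScale => 0 | ExpScale => expR t end.

Section defs.
Context {d : measure_display} {T : measurableType d} {R : realType}.
Variable (P : probability T R).

Definition Theta_gamma {k : nat} (sk : scale_kind) (X : T -> k.-tuple R)
    (g : k.-tuple R) : Prop :=
  P [set w | 0 < sc sk (dotv (X w) g)] = 1%E.

Definition Qobj {k : nat} (sk : scale_kind) (Y : T -> R) (X : T -> k.-tuple R)
    (b g : k.-tuple R) : \bar R :=
  'E_P[fun w => 2^-1 * ((((Y w - dotv (X w) b) / sc sk (dotv (X w) g)) ^+ 2 + 1)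
                         * sc sk (dotv (X w) g))].

(* Objective of the OLS problem: scalar scale parameter gamma *)
Definition QLS {k : nat} (sk : scale_kind) (Y : T -> R) (X : T -> k.-tuple R)
    (b : k.-tuple R) (g : R) : \bar R :=
  'E_P[fun w => 2^-1 * ((((Y w - dotv (X w) b) / sc sk g) ^+ 2 + 1) * sc sk g)].

(* m is a version of E[Z | X]: m is Borel on R^k, and for every Borel set B,
   E[Z 1{X in B}] = E[m(X) 1{X in B}] (both integrable). *)
Definition cond_exp_version {k : nat} (Z : T -> R) (X : T -> k.-tuple R)
    (m : k.-tuple R -> R) : Prop :=
  measurable_fun setT m /\
  P.-integrable setT (EFin \o Z) /\
  P.-integrable setT (EFin \o (m \o X)) /\
  forall B : set (k.-tuple R), measurable B ->
    (\int[P]_(w in X @^-1` B) (Z w)%:E = \int[P]_(w in X @^-1` B) (m (X w))%:E)%E.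

Definition support_of {k : nat} (X : T -> k.-tuple R) : set (k.-tuple R) :=
  [set x | forall e : R, 0 < e ->
     (0 < P [set w | forall i, (`|tnth (X w) i - tnth x i| < e)%R])%E].

End defs.

(* gamma_LS embedded in Theta: (gamma_LS, 0_{k-1}) *)
Definition embed_first {R : realType} (k : nat) (g : R) : k.-tuple R :=
  [tuple (if val i == 0%N then g else 0) | i < k].

From HB Require Import structures.
From mathcomp Require Import all_boot all_order all_algebra.
From mathcomp Require Import all_classical all_reals all_analysis.
From mathcomp Require Import measurable_realfun.
From mathcomp Require Import ring lra.
Import Order.TTheory GRing.Theory Num.Theory.
Local Open Scope classical_set_scope.
Local Open Scope ring_scope.

(* Rescaling the fitted scale by c > 0 (multiplying gamma for s(t) = t,
   shifting its intercept by ln c for s = exp) turns Q along that ray into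
   A / (2c) + c B / 2, where A = E[(Y - X'b)^2 / s(X'g)] and B = E[s(X'g)] at
   the minimiser (b, g); minimality at c = 1 forces A = B, so the minimum of Q
   equals A.  Likewise the OLS objective is V / (2t) + t / 2 in t = s(gamma),
   with V = E[(Y - X'beta_LS)^2], whose minimum over t > 0 is sqrt V.  Since
   theta_LS lies in Theta, A <= Q(theta_LS) = sqrt V, with equality iff
   theta_LS is a minimiser too, i.e. iff it is the unique minimiser.
   Assumptions 2-4 only serve in the paper to make the minimiser exist and be
   unique; both facts are hypotheses here. *)

Section scale_risk.
Context {R : realType}.
Implicit Types a b c v t : R.

Definition scale_risk a b c := 2^-1 / c * a + 2^-1 * c * b.

Lemma scale_risk_balanced a : scale_risk a a 1 = a.
Proof. by rewrite /scale_risk divr1 mulr1; field. Qed.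

Lemma scale_risk_min_balanced a b : 0 <= a -> 0 <= b ->
  (forall c, 0 < c -> scale_risk a b 1 <= scale_risk a b c) -> a = b.
Proof.
rewrite /scale_risk => a0 b0 Hmin.
have [b_eq0|b_neq0] := eqVneq b 0.
  have := Hmin 2 (ltr0Sn _ 1); rewrite b_eq0 !mulr0 !addr0 divr1.
  have -> : 2^-1 / 2 * a = 2^-1 * (2^-1 * a) :> R by field.
  lra.
have b_gt0 : 0 < b by rewrite lt_def b_neq0 b0.
(* The minimiser c = (a + b) / (2 b) turns the hypothesis into (a - b)^2 <= 0. *)
pose c := (a + b) / (2 * b).
have c_gt0 : 0 < c by rewrite divr_gt0 ?mulr_gt0 //; lra.
have c2b : c * (2 * b) = a + b by rewrite /c mulfVK // mulf_neq0.
have := Hmin c c_gt0; rewrite divr1 mulr1 => H.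
have {}H : c * (a + b) <= a + c * c * b.
  have := H; rewrite -(ler_pM2l c_gt0).
  have -> : c * (2^-1 / c * a + 2^-1 * c * b) = 2^-1 * (a + c * c * b).
    by field; rewrite gt_eqF.
  lra.
have sq : (a + b) * (a + b) <= 4 * a * b.
  have := H; rewrite -(ler_pM2r (mulr_gt0 (ltr0Sn R 1) b_gt0)).
  have -> : c * (a + b) * (2 * b) = (a + b) * (a + b) by rewrite mulrAC c2b.
  have -> : (a + c * c * b) * (2 * b) = 2 * a * b + (c * (2 * b)) * (c * (2 * b)) / 2.
    by field.
  rewrite c2b; lra.
nra.
Qed.

Lemma sqrt_le_scale_risk v t : 0 <= v -> 0 < t -> Num.sqrt v <= scale_risk v 1 t.
Proof.
move=> v0 t0; rewrite /scale_risk mulr1 -(ler_pM2l t0).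
have -> : t * (2^-1 / t * v + 2^-1 * t) = 2^-1 * (v + t * t) by field; rewrite gt_eqF.
rewrite -{2}(sqr_sqrtr v0) expr2.
have := sqr_ge0 (t - Num.sqrt v); rewrite expr2; nra.
Qed.

Lemma scale_risk_sqrt v : 0 < v -> scale_risk v 1 (Num.sqrt v) = Num.sqrt v.
Proof.
move=> v_gt0; have sv0 : Num.sqrt v != 0 by rewrite gt_eqF ?sqrtr_gt0.
have vE : v = Num.sqrt v * Num.sqrt v by rewrite -expr2 sqr_sqrtr // ltW.
by rewrite /scale_risk {2}vE; field.
Qed.

Lemma scale_risk_min_sqrt v t0 : 0 <= v -> 0 < t0 ->
  (forall t, 0 < t -> scale_risk v 1 t0 <= scale_risk v 1 t) ->
  scale_risk v 1 t0 = Num.sqrt v.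
Proof.
move=> v0 t00 Hmin; have [v_eq0|v_neq0] := eqVneq v 0.
  have := Hmin (t0 / 2); rewrite v_eq0 /scale_risk !mulr0 !add0r !mulr1.
  by move=> /(_ (divr_gt0 t00 (ltr0Sn _ 1))); lra.
have v_gt0 : 0 < v by rewrite lt_def v_neq0 v0.
apply/eqP; rewrite eq_le sqrt_le_scale_risk // andbT.
by rewrite -[X in _ <= X]scale_risk_sqrt // Hmin // sqrtr_gt0.
Qed.

End scale_risk.

Lemma measurable_inv (R : realType) : measurable_fun [set: R] (@GRing.inv R).
Proof.
have -> : [set: R] = ~` [set 0] `|` [set 0] by rewrite setUC setUv.
apply/measurable_funU => //; first exact: measurableC.
split; last exact: measurable_fun_set1.
apply: open_continuous_measurable_fun.
  exact/closed_openC/accessible_closed_set1/hausdorff_accessible/Rhausdorff.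
by move=> x; rewrite inE /= => /eqP x0; exact: inv_continuous.
Qed.

Section measurable_real_functions.
Context {d : measure_display} {T : measurableType d} {R : realType}.

Lemma measurable_fun_div (f g : T -> R) :
  measurable_fun setT f -> measurable_fun setT g ->
  measurable_fun setT (fun w => f w / g w).
Proof.
move=> mf mg; apply: measurable_funM => //.
exact: measurableT_comp (@measurable_inv R) mg.
Qed.

Lemma measurable_set_gt0 (f : T -> R) :
  measurable_fun setT f -> measurable [set w | 0 < f w].
Proof. by move=> mf; rewrite -preimage_itvoy -[X in measurable X]setTI; exact: mf. Qed.

Lemma measurable_fun_dotv k (X : T -> k.-tuple R) b :
  measurable_fun setT X -> measurable_fun setT (fun w => dotv (X w) b).
Proof.
move=> mX; apply: measurable_sum => i; apply: measurable_funM => //.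
exact: (measurable_fun_tnthP X).1 mX i.
Qed.

End measurable_real_functions.

Lemma measurable_sc (R : realType) sk : measurable_fun setT (@sc R sk).
Proof. by case: sk; [exact: measurable_id | exact: measurable_expR]. Qed.

Section integrals_on_full_sets.
Context {d : measure_display} {T : measurableType d} {R : realType}.
Variable P : probability T R.
Local Open Scope ereal_scope.

Lemma integral_setT_full (S : set T) (h : T -> \bar R) :
  measurable S -> P S = 1 -> measurable_fun setT h ->
  \int[P]_x h x = \int[P]_(x in S) h x.
Proof.
move=> mS PS mh; rewrite [RHS]integral_mkcond; apply: ae_eq_integral => //.
  by apply/(measurable_restrictT _ mS).1; exact: measurable_funS mh.
exists (~` S); split; first exact: measurableC.
  by have := probability_setC P mS; rewrite PS subee.
by move=> x /= nSx Sx; apply: nSx => _; rewrite patchE mem_set.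
Qed.

Lemma expectation_scale_risk (S : set T) (s D : T -> R) (c : R) :
  measurable S -> P S = 1 -> measurable_fun setT s -> measurable_fun setT D ->
  (forall w, (0 <= D w)%R) -> (forall w, S w -> (0 < s w)%R) -> (0 < c)%R ->
  'E_P[fun w => 2^-1 * (D w / (c * s w)) + 2^-1 * (c * s w)]%R =
  (2^-1 / c)%:E * \int[P]_(w in S) (D w / s w)%:E
    + (2^-1 * c)%:E * \int[P]_(w in S) (s w)%:E.
Proof.
move=> mS PS ms mD D0 s0 c0.
have mcs : measurable_fun setT (fun w => c * s w)%R by exact: measurable_funM.
have onS (f : T -> R) : measurable_fun setT f -> measurable_fun S (EFin \o f).
  by move=> mf; apply/measurable_EFinP; exact: measurable_funS mf.
have cs0 w : S w -> (0 < c * s w)%R by move=> Sw; rewrite mulr_gt0 ?s0.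
rewrite unlock (integral_setT_full _ _ mS PS); last first.
  apply/measurable_EFinP; apply: measurable_funD; apply: measurable_funM => //.
  exact: measurable_fun_div.
under eq_integral do rewrite EFinD.
rewrite ge0_integralD //; first last.
- by apply: onS; exact: measurable_funM.
- by move=> w Sw; rewrite lee_fin mulr_ge0 // ltW ?cs0.
- by apply: onS; apply: measurable_funM => //; exact: measurable_fun_div.
- by move=> w Sw; rewrite lee_fin mulr_ge0 // divr_ge0 // ltW ?cs0.
congr (_ + _).
- have split_inv w : (2^-1 * (D w / (c * s w)) = 2^-1 / c * (D w / s w))%R.
    by rewrite invfM; ring.
  under eq_integral do rewrite split_inv EFinM.
  rewrite ge0_integralZl //; first by apply: onS; exact: measurable_fun_div.
  + by move=> w Sw; rewrite lee_fin divr_ge0 // ltW ?s0.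
  + by rewrite lee_fin divr_ge0 // ltW.
- under eq_integral do rewrite mulrA EFinM.
  rewrite ge0_integralZl //; first exact: onS.
  + by move=> w Sw; rewrite lee_fin ltW ?s0.
  + by rewrite lee_fin mulr_ge0 // ltW.
Qed.

Lemma expectation_sqr_lty (Y : T -> R) : measurable_fun setT Y ->
  'E_P[fun w => Y w ^+ 4]%R < +oo -> 'E_P[fun w => Y w ^+ 2]%R < +oo.
Proof.
move=> mY Y4; rewrite unlock in Y4 *.
have mY2 : measurable_fun setT (fun w => Y w ^+ 2)%R by exact: measurable_funX.
have mY4 : measurable_fun setT (fun w => Y w ^+ 4)%R by exact: measurable_funX.
have Y4E w : (Y w ^+ 4 = (Y w ^+ 2) ^+ 2)%R by rewrite -exprM.
apply: (@le_lt_trans _ _ (\int[P]_w (1 + Y w ^+ 4)%:E)).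
  apply: ge0_le_integral => //.
  - by move=> w _; rewrite lee_fin sqr_ge0.
  - exact/measurable_EFinP.
  - exact/measurable_EFinP/measurable_funD.
  - by move=> w _; rewrite lee_fin Y4E; have := sqr_ge0 (Y w ^+ 2 - 1); nra.
under eq_integral do rewrite EFinD.
rewrite ge0_integralD //; last 2 first.
- by move=> w _; rewrite lee_fin Y4E sqr_ge0.
- exact/measurable_EFinP.
rewrite integral_cst // mul1e lte_add_pinfty //.
by apply: (le_lt_trans (probability_le1 _ measurableT)); exact: ltry.
Qed.

End integrals_on_full_sets.

Lemma lty_pos_combination_fin_num (R : realType) (c e : R) (x y : \bar R) :
  0 < c -> 0 < e -> (0 <= x)%E -> (0 <= y)%E -> (c%:E * x + e%:E * y < +oo)%E ->
  x \is a fin_num /\ y \is a fin_num.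
Proof.
move=> c0 e0; case: x => [r||//] _; case: y => [r'||//] _ //.
- by rewrite gt0_muley ?lte_fin // addey ?ltxx.
- by rewrite gt0_muley ?lte_fin // addye ?ltxx.
- by rewrite !gt0_muley ?lte_fin // addye ?ltxx.
Qed.

Definition rescale {R : realType} {k : nat} (sk : scale_kind) (c : R)
    (g : k.-tuple R) : k.-tuple R :=
  match sk with
  | LinScale => [tuple c * tnth g i | i < k]
  | ExpScale => [tuple tnth g i + (if val i == 0%N then ln c else 0) | i < k]
  end.

Definition sc_inv {R : realType} (sk : scale_kind) (t : R) : R :=
  match sk with LinScale => t | ExpScale => ln t end.

Lemma sc_invK {R : realType} sk (t : R) : 0 < t -> sc sk (sc_inv sk t) = t.
Proof. by case: sk => //= t0; rewrite lnK // posrE. Qed.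

Lemma scaled_loss_split {R : realType} (y v : R) :
  2^-1 * (((y / v) ^+ 2 + 1) * v) = 2^-1 * (y ^+ 2 / v) + 2^-1 * v.
Proof.
have [->|v0] := eqVneq v 0; first by rewrite !invr0 !mulr0 addr0.
rewrite mulrDl mul1r mulrDr expr_div_n; congr (_ * _ + _).
by rewrite [v ^+ 2]expr2 invfM mulrA mulfVK.
Qed.

Section first_regressor_one.
Context {R : realType} {k : nat} {hk : (0 < k)%N} {x : k.-tuple R}.
Hypothesis x1 : tnth x (Ordinal hk) = 1.

Lemma sum_mul_first (a : R) :
  \sum_(i < k) tnth x i * (if val i == 0%N then a else 0) = a.
Proof.
rewrite (bigD1 (Ordinal hk)) //= x1 mul1r big1 ?addr0 // => i /eqP i_neq0.
by case: eqP => [i0|]; [case: i_neq0; exact: val_inj | rewrite mulr0].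
Qed.

Lemma dotv_embed_first (a : R) : dotv x (embed_first k a) = a.
Proof.
by rewrite /dotv; under eq_bigr do rewrite tnth_mktuple; exact: sum_mul_first.
Qed.

Lemma sc_dotv_rescale sk (c : R) g :
  0 < c -> sc sk (dotv x (rescale sk c g)) = c * sc sk (dotv x g).
Proof.
move=> c0; case: sk; rewrite /sc /rescale /dotv.
- by rewrite mulr_sumr; apply: eq_bigr => i _; rewrite tnth_mktuple mulrCA.
- under eq_bigr do rewrite tnth_mktuple mulrDr.
  by rewrite big_split sum_mul_first expRD lnK ?posrE // mulrC.
Qed.

End first_regressor_one.

Section scale_model.
Context {d : measure_display} {T : measurableType d} {R : realType}.
Variables (P : probability T R) (k : nat) (hk : (0 < k)%N) (sk : scale_kind).
Variables (Y : T -> R) (X : T -> k.-tuple R).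
Hypotheses (mY : measurable_fun setT Y) (mX : measurable_fun setT X).
Hypothesis X1 : forall w, tnth (X w) (Ordinal hk) = 1.
Local Open Scope ereal_scope.

Let Theta := Theta_gamma P sk X.

Lemma measurable_fun_sqr_residual b :
  measurable_fun setT (fun w => (Y w - dotv (X w) b) ^+ 2)%R.
Proof. by apply/measurable_funX/measurable_funB => //; exact: measurable_fun_dotv. Qed.

Lemma measurable_fun_scale g : measurable_fun setT (fun w => sc sk (dotv (X w) g)).
Proof. by apply: measurableT_comp; [exact: measurable_sc | exact: measurable_fun_dotv]. Qed.

Lemma Theta_gamma_embed_first g : (0 < sc sk g)%R -> Theta (embed_first k g).
Proof.
move=> g0; rewrite /Theta /Theta_gamma.
under eq_set => w do rewrite (dotv_embed_first (X1 w)).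
rewrite (_ : [set _ | _] = setT); first exact: probability_setT.
by apply/seteqP; split => w.
Qed.

Lemma Qobj_embed_first b g : Qobj P sk Y X b (embed_first k g) = QLS P sk Y X b g.
Proof. by congr (expectation P _); apply/funext => w; rewrite (dotv_embed_first (X1 w)). Qed.

Lemma Theta_gamma_rescale c g : (0 < c)%R -> Theta g -> Theta (rescale sk c g).
Proof.
move=> c0 Theta_g; rewrite /Theta /Theta_gamma.
by under eq_set => w do rewrite (sc_dotv_rescale (X1 w)) // pmulr_rgt0 //.
Qed.

Section on_support_of_scale.
Variable g : k.-tuple R.
Hypothesis Theta_g : Theta g.
Local Notation s w := (sc sk (dotv (X w) g)).
Local Notation S := [set w | (0 < s w)%R].
Let mS : measurable S.
Proof. exact/measurable_set_gt0/measurable_fun_scale. Qed.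

Lemma expectation_scaled_sqr_residual b :
  'E_P[fun w => (Y w - dotv (X w) b) ^+ 2 / s w]%R =
  \int[P]_(w in S) ((Y w - dotv (X w) b) ^+ 2 / s w)%:E.
Proof.
rewrite unlock (integral_setT_full _ _ _ mS Theta_g) //.
apply/measurable_EFinP/measurable_fun_div; first exact: measurable_fun_sqr_residual.
exact: measurable_fun_scale.
Qed.

Lemma Qobj_scaled b g' c : (0 < c)%R ->
  (forall w, sc sk (dotv (X w) g') = c * s w)%R ->
  Qobj P sk Y X b g' =
  (2^-1 / c)%:E * \int[P]_(w in S) ((Y w - dotv (X w) b) ^+ 2 / s w)%:E
    + (2^-1 * c)%:E * \int[P]_(w in S) (s w)%:E.
Proof.
move=> c0 g'E; rewrite -expectation_scale_risk //.
- by congr (expectation P _); apply/funext => w; rewrite g'E scaled_loss_split.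
- exact: measurable_fun_scale.
- exact: measurable_fun_sqr_residual.
- by move=> w; exact: sqr_ge0.
Qed.

Lemma Qobj_min_balanced b :
  (forall c, (0 < c)%R -> Qobj P sk Y X b g <= Qobj P sk Y X b (rescale sk c g)) ->
  Qobj P sk Y X b g < +oo ->
  Qobj P sk Y X b g = 'E_P[fun w => (Y w - dotv (X w) b) ^+ 2 / s w]%R.
Proof.
move=> Qmin Qfin; rewrite expectation_scaled_sqr_residual.
pose A := \int[P]_(w in S) ((Y w - dotv (X w) b) ^+ 2 / s w)%:E.
pose B := \int[P]_(w in S) (s w)%:E.
have Qc c : (0 < c)%R ->
    Qobj P sk Y X b (rescale sk c g) = (2^-1 / c)%:E * A + (2^-1 * c)%:E * B.
  by move=> c0; apply: Qobj_scaled => // w; rewrite (sc_dotv_rescale (X1 w)).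
have Q1 : Qobj P sk Y X b g = (2^-1 / 1)%:E * A + (2^-1 * 1)%:E * B.
  by apply: Qobj_scaled => // w; rewrite mul1r.
have A0 : 0 <= A by apply: integral_ge0 => w Sw; rewrite lee_fin divr_ge0 ?sqr_ge0 ?ltW.
have B0 : 0 <= B by apply: integral_ge0 => w Sw; rewrite lee_fin ltW.
have [Afin Bfin] : A \is a fin_num /\ B \is a fin_num.
  apply: (@lty_pos_combination_fin_num _ (2^-1 / 1) (2^-1 * 1)) => //.
  by rewrite -Q1.
rewrite -/A -(fineK Afin) -(fineK Bfin) in Qc Q1 *.
move: (fine A) (fine B) (fine_ge0 A0) (fine_ge0 B0) Qc Q1 => a b' a0 b0 Qc Q1.
have {}Qc c : (0 < c)%R -> Qobj P sk Y X b (rescale sk c g) = (scale_risk a b' c)%:E.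
  by move=> c0; rewrite Qc // -!EFinM -EFinD.
have {}Q1 : Qobj P sk Y X b g = (scale_risk a b' 1)%:E by rewrite Q1 -!EFinM -EFinD.
have ab : a = b'.
  by apply: scale_risk_min_balanced => // c c0; rewrite -lee_fin -Q1 -Qc ?Qmin.
by rewrite Q1 -ab scale_risk_balanced.
Qed.

End on_support_of_scale.

Lemma QLS_expansion b g : (0 < sc sk g)%R ->
  QLS P sk Y X b g = (2^-1 / sc sk g)%:E * 'E_P[fun w => (Y w - dotv (X w) b) ^+ 2]%R
                     + (2^-1 * sc sk g)%:E.
Proof.
move=> g0; have := expectation_scale_risk P setT (fun=> 1%R) _ (sc sk g)
  measurableT (probability_setT P) (measurable_cst _)
  (measurable_fun_sqr_residual b) (fun w => sqr_ge0 _) (fun _ _ => ltr01) g0.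
under eq_fun do rewrite mulr1.
move=> expansion; rewrite /QLS; under eq_fun do rewrite scaled_loss_split.
rewrite expansion; congr (_ * _ + _).
  by rewrite unlock; apply: eq_integral => w _; rewrite divr1.
by rewrite integral_cst // mul1e [X in _ * X]probability_setT mule1.
Qed.

Section least_squares_minimum.
Variables (bLS : k.-tuple R) (gLS : R).
Hypothesis gLS_pos : (0 < sc sk gLS)%R.
Hypothesis QLS_min :
  forall b g, (0 < sc sk g)%R -> QLS P sk Y X bLS gLS <= QLS P sk Y X b g.

Lemma QLS_min_lty : 'E_P[fun w => Y w ^+ 4]%R < +oo -> QLS P sk Y X bLS gLS < +oo.
Proof.
move=> Y4; have one_pos : (0 < sc sk (sc_inv sk (1 : R)))%R by rewrite sc_invK.
apply: le_lt_trans (QLS_min (embed_first k 0) _ one_pos) _.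
rewrite QLS_expansion // sc_invK //.
have -> : (fun w => (Y w - dotv (X w) (embed_first k 0)) ^+ 2)%R = (fun w => Y w ^+ 2)%R.
  by apply/funext => w; rewrite (dotv_embed_first (X1 w)) subr0.
rewrite lte_add_pinfty ?ltry // lte_mul_pinfty ?lee_fin ?divr_ge0 //.
exact: expectation_sqr_lty.
Qed.

Lemma QLS_min_sqrt : QLS P sk Y X bLS gLS < +oo ->
  QLS P sk Y X bLS gLS = sqrte 'E_P[fun w => (Y w - dotv (X w) bLS) ^+ 2]%R.
Proof.
pose V := 'E_P[fun w => (Y w - dotv (X w) bLS) ^+ 2]%R.
have V0 : 0 <= V by rewrite /V unlock; apply: integral_ge0 => w _; rewrite lee_fin sqr_ge0.
move=> QLS_fin; have [Vfin _] : V \is a fin_num /\ (1 : \bar R) \is a fin_num.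
  apply: (@lty_pos_combination_fin_num R (2^-1 / sc sk gLS) (2^-1 * sc sk gLS)) => //.
  - by rewrite divr_gt0.
  - by rewrite mulr_gt0.
  - by rewrite mule1 -QLS_expansion.
have QLS_risk g : (0 < sc sk g)%R -> QLS P sk Y X bLS g = (scale_risk (fine V) 1 (sc sk g))%:E.
  by move=> g0; rewrite QLS_expansion // /scale_risk mulr1 -/V -{1}(fineK Vfin) -EFinM -EFinD.
rewrite -/V -(fineK Vfin) QLS_risk //=; congr EFin.
apply: scale_risk_min_sqrt => //; first exact: fine_ge0.
move=> t t0; have := QLS_min bLS (sc_inv sk t).
by rewrite !QLS_risk ?sc_invK // lee_fin; apply.
Qed.

End least_squares_minimum.
End scale_model.

Theorem corollary1 (d : measure_display) (T : measurableType d) (R : realType)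
  (P : probability T R) (k : nat) (hk : (0 < k)%N)
  (Y : T -> R) (X : T -> k.-tuple R) (sk : scale_kind)
  (mY : measurable_fun setT Y) (mX : measurable_fun setT X)
  (X1 : forall w, tnth (X w) (Ordinal hk) = 1)
  (* Assumption 2 *)
  (A2 : exists (mu sig2 : k.-tuple R -> R) (c : R),
      cond_exp_version P Y X mu /\
      cond_exp_version P (fun w => (Y w - mu (X w)) ^+ 2) X sig2 /\
      0 < c /\ forall x, support_of P X x -> c <= sig2 x)
  (* Assumption 3 (i) *)
  (A3Y : ('E_P[fun w => (Y w ^+ 4)%R] < +oo)%E)
  (A3X : ('E_P[fun w => (nrm2 (X w) ^+ 2)%R] < +oo)%E)
  (* Assumption 3 (ii) *)
  (A3s : forall g, Theta_gamma P sk X g ->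
     ('E_P[fun w => (nrm2 (X w) ^+ 2 * sc2 sk (dotv (X w) g) ^+ 2)%R] < +oo)%E /\
     ('E_P[fun w => (nrm2 (X w) ^+ 3 * sc3 sk (dotv (X w) g) ^+ 2)%R] < +oo)%E /\
     ('E_P[fun w => (nrm2 (X w) ^+ 3 * sc1 sk (dotv (X w) g) ^+ 2
                     * sc2 sk (dotv (X w) g) ^+ 2)%R] < +oo)%E)
  (* Assumption 4 *)
  (A4 : forall g, Theta_gamma P sk X g ->
     (forall i j : 'I_k, P.-integrable setT
        (fun w => (tnth (X w) i * tnth (X w) j / sc sk (dotv (X w) g))%:E)) /\
     (\matrix_(i < k, j < k)
        fine ('E_P[fun w => (tnth (X w) i * tnth (X w) j / sc sk (dotv (X w) g))%R])%E)
       \in unitmx)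
  (* theta* = (bs, gs) is the unique minimizer of Q over Theta *)
  (bs gs : k.-tuple R)
  (Hs_in : Theta_gamma P sk X gs)
  (Hs_min : forall b g, Theta_gamma P sk X g -> (b, g) <> (bs, gs) ->
     (Qobj P sk Y X bs gs < Qobj P sk Y X b g)%E)
  (* (bLS, gLS) minimizes the OLS objective *)
  (bLS : k.-tuple R) (gLS : R)
  (HLS_in : 0 < sc sk gLS)
  (HLS_min : forall b g, 0 < sc sk g -> (QLS P sk Y X bLS gLS <= QLS P sk Y X b g)%E) :
  ('E_P[fun w => ((Y w - dotv (X w) bs) ^+ 2 / sc sk (dotv (X w) gs))%R]
     <= sqrte 'E_P[fun w => ((Y w - dotv (X w) bLS) ^+ 2)%R])%E /\
  (('E_P[fun w => ((Y w - dotv (X w) bs) ^+ 2 / sc sk (dotv (X w) gs))%R]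
     = sqrte 'E_P[fun w => ((Y w - dotv (X w) bLS) ^+ 2)%R])%E
   <-> (bs, gs) = (bLS, embed_first k gLS)).
Proof.
have Q_ge b g : Theta_gamma P sk X g -> (Qobj P sk Y X bs gs <= Qobj P sk Y X b g)%E.
  move=> Theta_g; have [[-> ->] //|neq] := eqVneq (b, g) (bs, gs).
  exact/ltW/Hs_min/eqP.
have Theta_LS := Theta_gamma_embed_first P _ _ sk X X1 _ HLS_in.
have Q_LS := Qobj_embed_first P _ _ sk Y X X1 bLS gLS.
have QLS_fin := QLS_min_lty P _ _ sk Y X mY mX X1 _ _ HLS_min A3Y.
have Qs_le : (Qobj P sk Y X bs gs <= QLS P sk Y X bLS gLS)%E by rewrite -Q_LS Q_ge.
rewrite -(Qobj_min_balanced P _ _ sk Y X mY mX X1 _ Hs_in); first last.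
- exact: le_lt_trans Qs_le QLS_fin.
- by move=> c c0; apply/Q_ge/Theta_gamma_rescale.
rewrite -(QLS_min_sqrt P _ sk Y X mY mX _ _ HLS_in HLS_min QLS_fin).
split=> //; split=> [Qs_eq|[-> ->] //].
have [//|neq] := eqVneq (bs, gs) (bLS, embed_first k gLS).
have neq' : (bLS, embed_first k gLS) <> (bs, gs) by move=> e; rewrite e eqxx in neq.
by have := Hs_min _ _ Theta_LS neq'; rewrite Q_LS Qs_eq ltxx.
Qed.
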